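(* In the setting described in the context, let $D\subseteq A\subseteq D\cup T$ and $L\in\Pi_A$. Then $\dim\operatorname{span}\langle L,L^*\rangle_A=|L|$ if $L$ is shorted (with respect to $A$), and $\dim\operatorname{span}\langle L,L^*\rangle_A=2|L|-1$ otherwise.
   Context: Let $n\ge4$, $V=\{0,\dots,n-1\}$, and let $E=\{(u,v)\in V\times V:u\ne v\}$ be the set of arcs, written $uv$. Let $\chi_e\in\mathbb R^E$ be unit vectors and $\chi_F=\sum_{e\in F}\chi_e$. Let $\delta^\pm(w)$ be the arcs leaving/entering $w$, let $\delta^+(S)=\{uv:u\in S,v\notin S\}$, let $\mathcal S=\{S\subset V:2\le|S|\le n-2\}$, and let $x(F)=\sum_{e\in F}x_e$. The polytope is $P^n=\{x\in\mathbb R^E: x(\delta^+(w))=x(\delta^-(w))=1\ \forall w,\ x(\delta^+(S))\ge1\ \forall S\in\mathcal S,\ x\ge0\}$. Fix $\bar x\in P^n\cap\{0,\tfrac12\}^E$ and let $E_{\bar x}=\{e:\bar x_e=\tfrac12\}$. For $a\in\{0,1\}^E$ let $\mathrm{pr}(a)=\sum_{e\in E_{\bar x}}a_e\chi_e$. Let $\mathcal S_{\bar x}=\{S\in\mathcal S:\bar x(\delta^+(S))=1\}$. Define the sets $$D=\{\mathrm{pr}(\chi_{\delta^+(u)}),\mathrm{pr}(\chi_{\delta^-(u)}):u\in V\}, \qquad T=\{\mathrm{pr}(\chi_{\delta^+(S)}):S\in\mathcal S_{\bar x}\}.$$ Every vector of $D\cup T$ equals $\chi_{e_1}+\chi_{e_2}$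 for two distinct arcs $e_1,e_2\in E_{\bar x}$; it is written $[e_1,e_2]=[e_2,e_1]$. Let $A$ be a set with $D\subseteq A\subseteq D\cup T$. On $E_{\bar x}$ define the relation $e\sim_A e'$ iff there is $\bar e\in E_{\bar x}$ with $[e,\bar e]\in A$ and $[\bar e,e']\in A$. Let $\equiv_A$ be its transitive closure; this is an equivalence relation. The equivalence classes are called circuits, and they form the circuit partition $\Pi_A$ of $E_{\bar x}$. For $L\in\Pi_A$, the set $\{\bar e\in E_{\bar x}:\exists e\in L,\ [e,\bar e]\in A\}$ is nonempty and contained in a unique circuit, denoted $L^*_A$ and called the dual of $L$. The pair $\{L,L^*_A\}$ is a circuit pair. $L$ is called shorted if $L^*_A=L$. Define $\langle L,L^*\rangle_A=\{[e,\bar e]\in A: e\in L,\ \bar e\in L^*_A\}$. *)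

From HB Require Import structures.
From mathcomp Require Import all_boot all_order all_algebra.
From Stdlib Require Import Relation_Operators.
Set Implicit Arguments. Unset Strict Implicit. Unset Printing Implicit Defensive.
Import Order.TTheory GRing.Theory Num.Theory.
Local Open Scope ring_scope.

Definition darc (n : nat) := {p : 'I_n * 'I_n | p.1 != p.2}.

(* vectors of R^E ; R^o carries the vectType structure *)
Definition vec (R : realFieldType) (n : nat) := {ffun darc n -> R^o}.

Section Defs.
Variables (R : realFieldType) (n : nat).

Definition tl (e : darc n) : 'I_n := (val e).1.
Definition hd (e : darc n) : 'I_n := (val e).2.

Definition chi (F : {set darc n}) : vec R n := [ffun e => (e \in F)%:R].

Definition delta_out (w : 'I_n) : {set darc n} := [set e | tl e == w].
Definition delta_in (w : 'I_n) : {set darc n} := [set e | hd e == w].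
Definition delta_outS (S : {set 'I_n}) : {set darc n} :=
  [set e | (tl e \in S) && (hd e \notin S)].

Definition xsum (x : vec R n) (F : {set darc n}) : R := \sum_(e in F) x e.

Definition inSS (S : {set 'I_n}) : bool := (2 <= #|S|)%N && (#|S| <= n - 2)%N.

Definition inPn (x : vec R n) : Prop :=
  [/\ forall w, xsum x (delta_out w) = 1,
      forall w, xsum x (delta_in w) = 1,
      forall S, inSS S -> 1 <= xsum x (delta_outS S)
    & forall e, 0 <= x e].

Definition half_integral (x : vec R n) : Prop :=
  forall e, x e = 0 \/ x e = 2^-1.

Definition Ehalf (x : vec R n) : {set darc n} := [set e | x e == 2^-1].

Definition pr (x : vec R n) (a : vec R n) : vec R n :=
  [ffun e => if e \in Ehalf x then a e else 0].

Definition inSx (x : vec R n) (S : {set 'I_n}) : Prop :=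
  inSS S /\ xsum x (delta_outS S) = 1.

Definition inD (x : vec R n) (v : vec R n) : Prop :=
  exists u, v = pr x (chi (delta_out u)) \/ v = pr x (chi (delta_in u)).

Definition inT (x : vec R n) (v : vec R n) : Prop :=
  exists S, inSx x S /\ v = pr x (chi (delta_outS S)).

(* [e1, e2] = chi_{e1} + chi_{e2} (for distinct e1, e2) *)
Definition pairv (e1 e2 : darc n) : vec R n := chi [set e1; e2].

(* [e1,e2] \in A, where the notation presupposes distinct arcs of E_x *)
Definition inA (x : vec R n) (A : pred (vec R n)) (e1 e2 : darc n) : bool :=
  [&& e1 \in Ehalf x, e2 \in Ehalf x, e1 != e2 & pairv e1 e2 \in A].

Definition simA (x : vec R n) (A : pred (vec R n)) (e e' : darc n) : bool :=
  [&& e \in Ehalf x, e' \in Ehalf x &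
      [exists eb, (eb \in Ehalf x) && inA x A e eb && inA x A eb e']].

Definition equivA (x : vec R n) (A : pred (vec R n)) (e e' : darc n) : Prop :=
  Relation_Operators.clos_trans _ (fun a b => simA x A a b) e e'.

Definition circuit (x : vec R n) (A : pred (vec R n)) (L : {set darc n}) : Prop :=
  exists e, e \in Ehalf x /\ forall e', e' \in L <-> equivA x A e e'.

Definition is_dual (x : vec R n) (A : pred (vec R n)) (L M : {set darc n}) : Prop :=
  circuit x A M /\ forall e eb, e \in L -> inA x A e eb -> eb \in M.

Definition bracket (x : vec R n) (A : pred (vec R n)) (L M : {set darc n})
  : seq (vec R n) :=
  [seq pairv e eb | e <- enum L, eb <- [seq f <- enum M | inA x A e f]].

End Defs.

(* Since x(delta+(u)) = 1 and x is {0,1/2}-valued, every vertex u has exactly two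
   leaving arcs in E_x, so D pairs each arc g of E_x with its sibling, the other
   arc of E_x leaving the tail of g; in particular ~_A is reflexive on E_x.
   Let N be the set of arcs joined in A to some arc of L.  If e ~_A e' through
   eb, then chi_e - chi_e' = [e,eb] - [e',eb], so the span of <L,L*>_A contains
   every chi_l - chi_l' (l, l' in L) and is the span of all chi_l + chi_f with
   l in L, f in N.  The sibling map sends L into N and N into L injectively,
   hence |N| = |L|.  If L is shorted, N lies in L* = L, so N = L and, as 2 <> 0,
   the span is that of the chi_l.  Otherwise N and L are disjoint, since a
   common arc would force L* = L, and the span is that of the unsigned incidence
   vectors of the complete bipartite graph on L and N, which is connected, so
   its dimension is |L| + |N| - 1. *)

From HB Require Import structures.
From mathcomp Require Import all_boot all_order all_algebra.
From Stdlib Require Import Relation_Operators.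
Set Implicit Arguments. Unset Strict Implicit. Unset Printing Implicit Defensive.
Import Order.TTheory GRing.Theory Num.Theory.
Local Open Scope ring_scope.

Section CoordinateVectors.
Variables (K : fieldType) (I : finType).
Local Notation vecI := {ffun I -> K^o}.

Definition delta_vec (i : I) : vecI := [ffun j => (j == i)%:R].

Lemma delta_vecE i j : delta_vec i j = (j == i)%:R.
Proof. by rewrite ffunE. Qed.

Lemma span_coord_eq0 (X : seq vecI) i w :
  (forall v, v \in X -> v i = 0) -> w \in <<X>>%VS -> w i = 0.
Proof.
elim: X w => [|u X IH] w X0; first by rewrite span_nil memv0 => /eqP ->; rewrite ffunE.
rewrite span_cons => /memv_addP [_ /vlineP [k ->] [v Xv ->]].
rewrite !ffunE X0 ?mem_head // scaler0 add0r IH // => v' Xv'.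
by rewrite X0 // in_cons Xv' orbT.
Qed.

Lemma free_triangular (F : I -> vecI) (r : seq I) :
  all (fun i => F i i != 0) r -> pairwise (fun i j => F j i == 0) r ->
  free (map F r).
Proof.
elim: r => [|i r IH] /=; first by rewrite /free span_nil dimv0.
case/andP=> Fii Fr /andP [/allP Fr0 Fpw]; rewrite free_cons IH // andbT.
apply: contra Fii => /span_coord_eq0 -> // _ /mapP [j jr ->].
exact/eqP/Fr0.
Qed.

Definition pair_sums (L N : {set I}) : seq vecI :=
  [seq delta_vec l + delta_vec f | l <- enum L, f <- enum N].

Lemma memv_pair_sums (L N : {set I}) l f :
  l \in L -> f \in N -> delta_vec l + delta_vec f \in <<pair_sums L N>>%VS.
Proof.
by move=> lL fN; apply/memv_span/allpairs_f; rewrite mem_enum.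
Qed.

Lemma pair_sums_subv (L N : {set I}) (U : {vspace vecI}) :
  (forall l f, l \in L -> f \in N -> delta_vec l + delta_vec f \in U) ->
  (<<pair_sums L N>> <= U)%VS.
Proof.
move=> LNU; apply/span_subvP => _ /allpairsP [[l f] [/= lL fN ->]].
by apply: LNU; rewrite -mem_enum.
Qed.

Lemma free_delta_vec (s : seq I) : uniq s -> free (map delta_vec s).
Proof.
move=> us; apply: free_triangular.
  by apply/allP => i _; rewrite delta_vecE eqxx oner_neq0.
move: us; rewrite uniq_pairwise; apply: sub_pairwise => i j /=.
by rewrite delta_vecE eq_sym => /negbTE ->.
Qed.

Lemma dim_pair_sums_diag (L : {set I}) : (2 : K) != 0 -> \dim <<pair_sums L L>> = #|L|.
Proof.
move=> two_neq0; rewrite cardE -(size_map delta_vec) -(eqP (free_delta_vec (enum_uniq L))).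
congr (\dim _); apply/eqP; rewrite eqEsubv; apply/andP; split.
  by apply: pair_sums_subv => l f lL fL; apply: memvD; apply/memv_span/map_f; rewrite mem_enum.
apply/span_subvP => v /mapP [l]; rewrite mem_enum => lL ->.
have -> : delta_vec l = 2^-1 *: (delta_vec l + delta_vec l).
  by rewrite -mulr2n -scaler_nat scalerA mulVf ?scale1r.
exact/memvZ/memv_pair_sums.
Qed.

Section DoubleStar.
Variables (L N : {set I}) (e0 f0 : I).
Hypotheses (e0L : e0 \in L) (f0N : f0 \in N) (dLN : [disjoint L & N]).

(* The pairs (g, f0), g in L, and (e0, g), g in N, are the edges of a spanning
   tree of the complete bipartite graph between L and N. *)
Definition double_star g : vecI :=
  if g \in L then delta_vec g + delta_vec f0 else delta_vec e0 + delta_vec g.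

Definition double_star_support := rcons (enum ((L :\ e0) :|: (N :\ f0))) e0.
Local Notation U := ((L :\ e0) :|: (N :\ f0)).
Local Notation r := double_star_support.

Lemma notin_disjoint g : g \in N -> g \notin L.
Proof. by move=> gN; apply: contraTN dLN => gL; apply/pred0Pn; exists g; apply/andP. Qed.

Lemma neq_disjoint l f : l \in L -> f \in N -> l != f.
Proof. by move=> lL /notin_disjoint; apply: contraNneq => <-. Qed.

Lemma double_star_supportP g : g \in r -> g \in L :|: N.
Proof.
rewrite mem_rcons in_cons mem_enum !inE => /orP [/eqP -> | ]; first by rewrite e0L.
by case/orP => /andP [_ ->]; rewrite ?orbT.
Qed.

Lemma double_starE h g : g != e0 -> g != f0 -> double_star h g = (g == h)%:R.
Proof.
move=> ge gf; rewrite /double_star.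
by case: ifP => _; rewrite !ffunE ?(negbTE ge) ?(negbTE gf) ?addr0 ?add0r.
Qed.

Lemma span_double_star : <<pair_sums L N>>%VS = <<map double_star r>>%VS.
Proof.
have memF g : g \in L :|: N -> double_star g \in <<map double_star r>>%VS.
  have [-> _ | gf gLN] := eqVneq g f0.
    have -> : double_star f0 = double_star e0.
      by rewrite /double_star e0L (negbTE (notin_disjoint f0N)).
    by apply/memv_span/map_f; rewrite mem_rcons mem_head.
  apply/memv_span/map_f; rewrite mem_rcons in_cons mem_enum.
  have [// | ge] := eqVneq g e0.
  by rewrite !inE ge gf /=; rewrite !inE in gLN.
apply/eqP; rewrite eqEsubv; apply/andP; split.
  apply: pair_sums_subv => l f lL fN.
  have -> : delta_vec l + delta_vec f = double_star l + double_star f - double_star e0.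
    apply/eqP; rewrite eq_sym subr_eq /double_star lL e0L (negbTE (notin_disjoint fN)).
    by rewrite [X in X == _]addrACA [X in _ == X]addrACA (addrC (delta_vec f)).
  by apply/memvB/memF; [apply/memvD; apply/memF|]; rewrite !inE ?lL ?fN ?e0L ?orbT.
apply/span_subvP => _ /mapP [g /double_star_supportP gLN ->]; rewrite /double_star.
case: ifP => gL; first exact: memv_pair_sums.
by apply: memv_pair_sums; move: gLN; rewrite // inE gL.
Qed.

Lemma free_double_star : free (map double_star r).
Proof.
have memU g : g \in U -> (g != e0) && (g != f0).
  rewrite !inE => /orP [/andP [-> gL] | /andP [-> gN]]; rewrite ?andbT //=.
    exact: neq_disjoint gL f0N.
  by rewrite eq_sym (neq_disjoint e0L gN).
apply: free_triangular.
  apply/allP => g /double_star_supportP; rewrite inE => /orP [gL | gN].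
    by rewrite /double_star gL !ffunE eqxx (negbTE (neq_disjoint gL f0N)) addr0 oner_neq0.
  rewrite /double_star (negbTE (notin_disjoint gN)) !ffunE eqxx [g == e0]eq_sym.
  by rewrite (negbTE (neq_disjoint e0L gN)) add0r oner_neq0.
rewrite pairwise_rcons; apply/andP; split.
  apply/allP => g; rewrite mem_enum => /memU /andP [ge gf].
  by rewrite double_starE // (negbTE ge).
have := enum_uniq U; rewrite uniq_pairwise; apply: (sub_in_pairwise (P := mem U)).
  by move=> g h /memU /andP [ge gf] _ /= gh; rewrite double_starE // (negbTE gh).
by apply/allP => g; rewrite mem_enum.
Qed.

Lemma size_double_star_support : size r = (#|L| + #|N|).-1.
Proof.
have cardU : #|U| = (#|L :\ e0| + #|N :\ f0|)%N.
  apply/eqP; rewrite (leq_card_setU _ _).2.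
  by apply: disjointWl (subsetDl _ _) (disjointWr (subsetDl _ _) dLN).
rewrite size_rcons -cardE cardU (cardsD1 e0 L) (cardsD1 f0 N) e0L f0N.
by rewrite addSn addnS.
Qed.
End DoubleStar.

Lemma dim_pair_sums_disjoint (L N : {set I}) :
  L != set0 -> N != set0 -> [disjoint L & N] ->
  \dim <<pair_sums L N>> = (#|L| + #|N|).-1.
Proof.
case/set0Pn=> e0 e0L /set0Pn [f0 f0N] dLN.
rewrite (span_double_star e0L f0N dLN) (eqP (free_double_star e0L f0N dLN)).
by rewrite size_map size_double_star_support.
Qed.
End CoordinateVectors.

Arguments delta_vec {K I}.
Arguments pair_sums {K I}.

Section Circuits.
Variables (R : realFieldType) (n : nat) (x : vec R n) (A : pred (vec R n)).
Local Notation E := (Ehalf x).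
Local Notation equivA := (equivA x A).
Local Notation delta := (@delta_vec R (darc n)).

Lemma pairv_delta (a b : darc n) : a != b -> pairv R a b = delta a + delta b.
Proof.
move=> ab; apply/ffunP => h; rewrite !ffunE !inE.
by have [->|] := eqVneq h a; rewrite ?(negbTE ab) ?addr0 ?add0r.
Qed.

Lemma inA_sym a b : inA x A a b = inA x A b a.
Proof. by rewrite /inA /pairv setUC eq_sym; case: (a \in E); case: (b \in E). Qed.

Lemma simA_sym a b : simA x A a b -> simA x A b a.
Proof.
case/and3P => aE bE /existsP [c /andP [/andP [cE ac] cb]].
by rewrite /simA bE aE; apply/existsP; exists c; rewrite cE inA_sym cb inA_sym.
Qed.

Lemma equivA_sym a b : equivA a b -> equivA b a.
Proof.
by elim=> [a' b' /simA_sym ba | a' b' c' _ ba _ cb]; [exact: t_step | exact: t_trans cb ba].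
Qed.

Lemma equivA_Ehalf a b : equivA a b -> b \in E.
Proof. by elim=> [a' b' /and3P [] |]. Qed.

Lemma circuit_closed L a b : circuit x A L -> a \in L -> equivA a b -> b \in L.
Proof. by case=> e0 [_ Le0] /Le0 e0a ab; apply/Le0; exact: t_trans e0a ab. Qed.

Lemma circuit_equiv L a b : circuit x A L -> a \in L -> b \in L -> equivA a b.
Proof.
by case=> e0 [_ Le0] /Le0 e0a /Le0 e0b; exact: t_trans (equivA_sym e0a) e0b.
Qed.

Lemma circuit_sub_Ehalf L : circuit x A L -> L \subset E.
Proof. by case=> e0 [_ Le0]; apply/subsetP => a /Le0 /equivA_Ehalf. Qed.

Lemma circuit_eq L M f : circuit x A L -> circuit x A M -> f \in L -> f \in M -> M = L.
Proof.
move=> hL hM fL fM; apply/setP => g; apply/idP/idP => [gM | gL].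
  exact: circuit_closed hL fL (circuit_equiv hM fM gM).
exact: circuit_closed hM fM (circuit_equiv hL fL gL).
Qed.

Lemma pr_chi F : pr x (chi R F) = chi R (F :&: E).
Proof. by apply/ffunP => e; rewrite !ffunE in_setI; case: (e \in E); rewrite ?andbT ?andbF. Qed.

Lemma card_out_half u :
  half_integral x -> xsum x (delta_out u) = 1 -> #|delta_out u :&: E| = 2%N.
Proof.
move=> hx; rewrite /xsum (big_setID E) /= [X in _ + X]big1 ?addr0; last first.
  by move=> e; rewrite !inE => /andP [eE _]; case: (hx e) => // /eqP; rewrite (negbTE eE).
rewrite (eq_bigr (fun _ => 2^-1)) => [|e]; last by rewrite !inE => /andP [_ /eqP].
have two_neq0 : (2 : R) != 0 by rewrite pnatr_eq0.
rewrite sumr_const -[_ *+ #|_|]mulr_natl => /(canRL (divfK two_neq0)).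
by rewrite mul1r => /eqP; rewrite eqr_nat => /eqP.
Qed.

Section HalfIntegral.
Hypotheses (half_x : half_integral x) (out_deg1 : forall w, xsum x (delta_out w) = 1)
  (D_sub_A : forall v, inD x v -> v \in A).

Definition sibling g := odflt g [pick f in (delta_out (tl g) :&: E) :\ g].

Lemma siblingP g : g \in E ->
  [/\ sibling g \in E, tl (sibling g) = tl g, sibling g != g
    & delta_out (tl g) :&: E = [set g; sibling g]].
Proof.
move=> gE; have card2 u := card_out_half half_x (out_deg1 u).
have gS : g \in delta_out (tl g) :&: E by rewrite in_setI gE andbT inE.
have card1 : #|(delta_out (tl g) :&: E) :\ g| = 1%N.
  by have := cardsD1 g (delta_out (tl g) :&: E); rewrite gS card2 => -[->].
rewrite /sibling; case: pickP => [f | S0]; last by move: card1; rewrite (eq_card0 S0).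
rewrite in_setD1 in_setI [f \in delta_out _]inE => /and3P [fg /eqP tf fE].
rewrite fE tf fg; split=> //; apply/eqP; rewrite eq_sym eqEcard cards2 eq_sym fg card2 andbT.
apply/subsetP => y /=; rewrite in_set2 => /orP [] /eqP -> //.
by rewrite in_setI fE andbT inE tf.
Qed.

Lemma sibling_inA g : g \in E -> inA x A g (sibling g).
Proof.
move=> gE; have [sE _ sg Sg] := siblingP gE.
rewrite /inA gE sE eq_sym sg /pairv -Sg -pr_chi; apply: D_sub_A.
by exists (tl g); left.
Qed.

Lemma sibling_inj : {in E &, injective sibling}.
Proof.
move=> a b aE bE ab; have [_ ta sa _] := siblingP aE; have [_ tb _ Sb] := siblingP bE.
have : a \in delta_out (tl b) :&: E by rewrite in_setI aE andbT inE -tb -ab ta.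
by rewrite Sb in_set2 => /orP [/eqP // | /eqP a_sb]; move: sa; rewrite ab -a_sb eqxx.
Qed.

Lemma simA_refl g : g \in E -> simA x A g g.
Proof.
move=> gE; have [sE _ _ _] := siblingP gE.
rewrite /simA gE; apply/existsP; exists (sibling g).
by rewrite sE sibling_inA // inA_sym sibling_inA.
Qed.

Lemma circuit_neq0 L : circuit x A L -> L != set0.
Proof. by case=> e0 [e0E Le0]; apply/set0Pn; exists e0; apply/Le0/t_step/simA_refl. Qed.

Variables (L Lstar : {set darc n}).
Hypotheses (hL : circuit x A L) (hdual : is_dual x A L Lstar).

Definition nbhd := [set f | [exists l in L, inA x A l f]].

Lemma nbhdP f : reflect (exists2 l, l \in L & inA x A l f) (f \in nbhd).
Proof. by rewrite inE; apply: exists_inP. Qed.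

Lemma nbhd_sub_dual : nbhd \subset Lstar.
Proof. by case: hdual => _ Lstar_nb; apply/subsetP => f /nbhdP [l lL /Lstar_nb]; apply. Qed.

Lemma sibling_nbhd l : l \in L -> sibling l \in nbhd.
Proof.
by move=> lL; apply/nbhdP; exists l; rewrite // sibling_inA // (subsetP (circuit_sub_Ehalf hL)).
Qed.

Lemma nbhd_sibling f : f \in nbhd -> sibling f \in L.
Proof.
case/nbhdP => l lL lf; have /and4P [lE fE _ _] := lf.
apply: circuit_closed hL lL (t_step _ _ _ _ _); have [sE _ _ _] := siblingP fE.
by rewrite /simA lE sE; apply/existsP; exists f; rewrite fE lf sibling_inA.
Qed.

Lemma card_nbhd : #|nbhd| = #|L|.
Proof.
have nbE : nbhd \subset E.
  by apply/subsetP => f /nbhdP [l _ /and4P []].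
have sub_inj (B : {set darc n}) : B \subset E -> {in B &, injective sibling}.
  by move=> /subsetP BE a b /BE aE /BE bE; apply: sibling_inj.
apply/eqP; rewrite eqn_leq; apply/andP; split.
  rewrite -(card_in_imset (sub_inj _ nbE)).
  by apply/subset_leq_card/subsetP => _ /imsetP [f /nbhd_sibling fL ->].
rewrite -(card_in_imset (sub_inj _ (circuit_sub_Ehalf hL))).
by apply/subset_leq_card/subsetP => _ /imsetP [l /sibling_nbhd lN ->].
Qed.

Lemma nbhd_shorted : Lstar = L -> nbhd = L.
Proof.
move=> LsL; apply/eqP; rewrite eqEcard card_nbhd leqnn andbT -LsL.
exact: nbhd_sub_dual.
Qed.

Lemma disjoint_nbhd : Lstar != L -> [disjoint L & nbhd].
Proof.
case: hdual => hLs _ LsL; apply/pred0P => f /=; apply/negbTE/negP => /andP [fL fN].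
by move: LsL; rewrite (circuit_eq hL hLs fL (subsetP nbhd_sub_dual _ fN)) eqxx.
Qed.

Local Notation W := (<<bracket x A L Lstar>>%VS).

Lemma memv_bracket_edge l f :
  l \in L -> inA x A l f -> delta l + delta f \in W.
Proof.
move=> lL lf; have /and4P [_ _ neq_lf _] := lf.
rewrite -pairv_delta //; apply/memv_span/allpairsPdep; exists l, f.
by rewrite mem_enum mem_filter mem_enum lf (subsetP nbhd_sub_dual) //; apply/nbhdP; exists l.
Qed.

Lemma memv_bracket_diff a b : a \in L -> equivA a b -> delta a - delta b \in W.
Proof.
move=> aL ab; elim: ab aL => {a b} [a b ab | a b c ab IHab _ IHbc] aL.
  have bL := circuit_closed hL aL (t_step _ _ _ _ ab).
  case/and3P: ab => _ _ /existsP [c /andP [/andP [_ ac] cb]].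
  rewrite -(addrKA (delta c)); apply: memvB; first exact: memv_bracket_edge ac.
  by rewrite addrC; apply: memv_bracket_edge bL _; rewrite inA_sym.
have bL := circuit_closed hL aL ab.
rewrite -[delta a](subrK (delta b)) -addrA; apply: memvD; [exact: IHab | exact: IHbc].
Qed.

Lemma span_bracket : W = <<pair_sums L nbhd>>%VS.
Proof.
apply/eqP; rewrite eqEsubv; apply/andP; split.
  apply/span_subvP => _ /allpairsPdep [l [f [lL + ->]]].
  rewrite mem_enum in lL; rewrite mem_filter mem_enum => /andP [lf _].
  have /and4P [_ _ neq_lf _] := lf.
  by rewrite pairv_delta //; apply: memv_pair_sums => //; apply/nbhdP; exists l.
apply: pair_sums_subv => l f lL /nbhdP [l1 l1L l1f].
rewrite -[delta l](subrK (delta l1)) -addrA; apply: memvD.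
  exact/memv_bracket_diff/(circuit_equiv hL).
exact: memv_bracket_edge l1f.
Qed.
End HalfIntegral.
End Circuits.

Theorem mainTheorem8 (R : realFieldType) (n : nat) (x : vec R n)
  (A : pred (vec R n)) (L Lstar : {set (darc n)}) :
  (4 <= n)%N ->
  inPn x -> half_integral x ->
  (forall v, inD x v -> v \in A) ->
  (forall v, v \in A -> inD x v \/ inT x v) ->
  circuit x A L ->
  is_dual x A L Lstar ->
  \dim (<< bracket x A L Lstar >>)%VS =
    (if Lstar == L then #|L| else (2 * #|L|).-1)%N.
Proof.
move=> _ [out_deg1 _ _ _] half_x D_sub_A _ hL hdual.
have L_n0 := circuit_neq0 half_x out_deg1 D_sub_A hL.
rewrite (span_bracket hL hdual); case: eqP => [LsL | /eqP LsL].
  rewrite (nbhd_shorted half_x out_deg1 D_sub_A hL hdual LsL).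
  by rewrite dim_pair_sums_diag // pnatr_eq0.
have card_N := card_nbhd half_x out_deg1 D_sub_A hL.
have N_n0 : nbhd x A L != set0 by rewrite -card_gt0 card_N card_gt0.
by rewrite dim_pair_sums_disjoint ?(disjoint_nbhd hL hdual LsL) // card_N addnn mul2n.
Qed.
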